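(* Let $x_1,x_2,x_3>0$, $\gamma,\delta>0$ with $\gamma\ne1\ne\delta$, and let $$\mathbf{Q}=\begin{pmatrix}1&\delta x_1&x_2&x_3\\ 1/(\delta x_1)&1&x_2/x_1&x_3/x_1\\ 1/x_2&x_1/x_2&1&\gamma x_3/x_2\\ 1/x_3&x_1/x_3&x_2/(\gamma x_3)&1\end{pmatrix}$$ with principal right eigenvector $\mathbf{w}^{EM}$. If $\delta<1$ and $\gamma>1$, then $w_2^{EM}/w_4^{EM}>x_3/x_1$.
   Context: The principal right eigenvector is the positive (Perron) eigenvector belonging to the largest eigenvalue. *)

From HB Require Import structures.
From mathcomp Require Import all_boot all_order all_algebra.
Set Implicit Arguments. Unset Strict Implicit. Unset Printing Implicit Defensive.
Import Order.TTheory GRing.Theory Num.Theory.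
Local Open Scope ring_scope.

(* Indices 0..3 correspond to the paper's 1..4. *)
Definition Qmat (R : realFieldType) (x1 x2 x3 gamma delta : R) : 'M[R]_4 :=
  \matrix_(i < 4, j < 4)
   match nat_of_ord i, nat_of_ord j with
   | 0, 0 => 1 | 0, 1 => delta * x1 | 0, 2 => x2 | 0, _ => x3
   | 1, 0 => (delta * x1)^-1 | 1, 1 => 1 | 1, 2 => x2 / x1 | 1, _ => x3 / x1
   | 2, 0 => x2^-1 | 2, 1 => x1 / x2 | 2, 2 => 1 | 2, _ => gamma * x3 / x2
   | _, 0 => x3^-1 | _, 1 => x1 / x3 | _, 2 => x2 / (gamma * x3) | _, _ => 1
   end.

Definition principal_right_eigenvector (R : realFieldType) (n : nat)
  (A : 'M[R]_n) (w : 'cV[R]_n) : Prop :=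
  (forall i, 0 < w i 0) /\
  exists lam : R, A *m w = lam *: w /\ eigenvalue A lam /\
    (forall mu : R, eigenvalue A mu -> mu <= lam).

(* Scale the second and fourth rows of [Q w = lam w] by [x1] and [x3] and
   subtract: all terms cancel except [(1/delta - 1) w1 + x2 (1 - 1/gamma) w3],
   which is positive, so [lam (x1 w2 - x3 w4) > 0]. Since [Q] is a positive
   matrix, [lam > 0], whence [x1 w2 > x3 w4]. *)

From HB Require Import structures.
From mathcomp Require Import all_boot all_order all_algebra.
From mathcomp Require Import ring.
Set Implicit Arguments. Unset Strict Implicit. Unset Printing Implicit Defensive.
Import Order.TTheory GRing.Theory Num.Theory.
Local Open Scope ring_scope.

Lemma big_ord4 (V : nmodType) (F : 'I_4 -> V) :
  \sum_(i < 4) F i = F 0 + F 1 + F 2 + F 3.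
Proof.
rewrite !big_ord_recl big_ord0 addr0 !addrA.
by congr (_ + _ + _ + _); congr F; apply/val_inj.
Qed.

Lemma eigenvector_row (R : pzRingType) (n : nat) (A : 'M[R]_n) (w : 'cV[R]_n)
    (lam : R) (i : 'I_n) :
  A *m w = lam *: w -> \sum_j A i j * w j 0 = lam * w i 0.
Proof. by move=> /(congr1 (fun M : 'cV[R]_n => M i 0)); rewrite !mxE. Qed.

Lemma eigenvalue_gt0_of_positive (R : realFieldType) (n : nat)
    (A : 'M[R]_n.+1) (w : 'cV[R]_n.+1) (lam : R) :
  (forall i j, 0 < A i j) -> (forall i, 0 < w i 0) ->
  A *m w = lam *: w -> 0 < lam.
Proof.
move=> Apos wpos /(eigenvector_row ord0) Aw.
have : 0 < lam * w 0 0.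
  by rewrite -Aw (bigD1 ord0) //= ltr_wpDr ?sumr_ge0 // => *;
    rewrite ?mulr_ge0 ?ltW ?mulr_gt0.
by rewrite pmulr_lgt0.
Qed.

Section Qmat.

Variables (R : realFieldType) (x1 x2 x3 gamma delta : R).
Hypotheses (x1_gt0 : 0 < x1) (x2_gt0 : 0 < x2) (x3_gt0 : 0 < x3)
  (gamma_gt0 : 0 < gamma) (delta_gt0 : 0 < delta).

Local Notation Q := (Qmat x1 x2 x3 gamma delta).

Lemma Qmat_gt0 (i j : 'I_4) : 0 < Q i j.
Proof.
rewrite mxE; case: i j => [[|[|[|[|//]]]] ?] [[|[|[|[|//]]]] ?] /=;
  by rewrite ?(mulr_gt0, divr_gt0, invr_gt0).
Qed.

Lemma Qmat_eigen_rows_diff (w : 'cV[R]_4) (lam : R) :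
  Q *m w = lam *: w ->
  lam * (x1 * w 1 0 - x3 * w 3 0)
  = (delta^-1 - 1) * w 0 0 + (1 - gamma^-1) * x2 * w 2 0.
Proof.
move=> Qw; have := eigenvector_row 1 Qw; have := eigenvector_row 3 Qw.
rewrite !big_ord4 !mxE /= => row3 row1.
have [x1N0 x3N0] : x1 != 0 /\ x3 != 0 by rewrite !gt_eqF.
have [gN0 dN0] : gamma != 0 /\ delta != 0 by rewrite !gt_eqF.
have -> : lam * (x1 * w 1 0 - x3 * w 3 0)
          = x1 * (lam * w 1 0) - x3 * (lam * w 3 0) by ring.
by rewrite -row1 -row3; field; rewrite gN0 dN0 x1N0 x3N0.
Qed.

End Qmat.

Theorem mainTheorem15 (R : realFieldType) (x1 x2 x3 gamma delta : R)
  (w : 'cV[R]_4) :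
  0 < x1 -> 0 < x2 -> 0 < x3 -> 0 < gamma -> 0 < delta ->
  gamma != 1 -> delta != 1 ->
  principal_right_eigenvector (Qmat x1 x2 x3 gamma delta) w ->
  delta < 1 -> 1 < gamma ->
  x3 / x1 < w 1 0 / w 3 0.
Proof.
move=> x1_gt0 x2_gt0 x3_gt0 g_gt0 d_gt0 _ _ [wpos [lam [Qw _]]] d_lt1 g_gt1.
have Qpos := Qmat_gt0 x1_gt0 x2_gt0 x3_gt0 g_gt0 d_gt0.
have lam_gt0 := eigenvalue_gt0_of_positive Qpos wpos Qw.
have diff_gt0 : 0 < lam * (x1 * w 1 0 - x3 * w 3 0).
  rewrite (Qmat_eigen_rows_diff x1_gt0 x3_gt0 g_gt0 d_gt0 Qw).
  by rewrite addr_gt0 ?mulr_gt0 ?subr_gt0 ?invf_gt1 ?invf_lt1.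
rewrite ltr_pdivrMr ?wpos // mulrAC ltr_pdivlMr // -subr_gt0 (mulrC (w 1 0)).
by rewrite -(pmulr_rgt0 _ lam_gt0).
Qed.
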